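(* In the setting below, let $\alpha$ be a limit ordinal, let $\emptyset\neq x\subseteq M_\alpha$, let $I=\{\beta<\alpha: x\cap M_{\beta+1}\neq\emptyset\}$, and for $\beta\in I$ let $x_{\beta+1}=x\cap M_{\beta+1}$. Then $x\in M_{\alpha+1}$ if and only if $I\neq\emptyset$, $x=\bigcup_{\beta\in I}x_{\beta+1}$, and $x_{\beta+1}\in M_{\beta+2}$ for every $\beta\in I$.
   Context: Work in ZFA (ZF with a set $A$ of atoms, i.e. urelements that have no elements), extended by a primitive binary relation $\preccurlyeq$ on $A$, with Separation and Replacement holding for formulas mentioning $\preccurlyeq$. $A$ is an infinite set of atoms and $\preccurlyeq$ is a pre-ordering (reflexive, transitive) on $A$ with no minimal elements: for every $a\in A$ there is $b\in A$ with $b\preccurlyeq a$ and not $a\preccurlyeq b$. For $a\in A$, $pr(a)=\{b\in A:b\preccurlyeq a\}$; $LO(A,\preccurlyeq)$ is the set of nonempty $x\subseteq A$ with $pr(a)\subseteq x$ for all $a\in x$. For a set $X$ of sets, $LO(X,\subseteq)$ is the set of nonempty $x\subseteq X$ such that for every $y\in x$ and every $z\in X$ with $z\subseteq y$, $z\in x$. The magmatic hierarchy: $M_1=LO(A,\preccurlyeq)$; $M_{\alpha+1}=LO(M_\alpha,\subseteq)$ for $\alpha\geq1$; $M_\alpha=\bigcup_{1\leq\beta<\alpha}M_\beta$ for limit $\alpha$; $M=\bigcup_{\alpha\geq1}M_\alpha$. (Here $M_{0+1}=M_1$.) Limit ordinals are nonzero. *)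

(* A model of ZFA-style sets over a type of atoms (Aczel-style
   well-founded trees with extensional equality), ordinals given by an
   arbitrary well-ordered type with successors, and the magmatic hierarchy. *)
From Stdlib Require Import List.

Inductive V (A : Type) : Type :=
| Atom : A -> V A
| Sup : forall Ix : Type, (Ix -> V A) -> V A.
Arguments Atom {A} _.
Arguments Sup {A} _ _.

Fixpoint veq {A : Type} (x y : V A) : Prop :=
  match x with
  | Atom a => match y with Atom b => a = b | Sup _ _ => False end
  | Sup Ix f =>
      match y with
      | Atom _ => False
      | Sup J g => (forall i, exists j, veq (f i) (g j)) /\
                   (forall j, exists i, veq (f i) (g j))
      end
  end.

Definition mem {A : Type} (y x : V A) : Prop :=
  match x with
  | Atom _ => False
  | Sup Ix f => exists i, veq y (f i)
  end.

Definition vsub {A : Type} (y z : V A) : Prop := forall w, mem w y -> mem w z.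

Definition sep {A : Type} (x : V A) (P : V A -> Prop) : V A :=
  match x with
  | Atom a => Atom a
  | Sup Ix f => Sup {i : Ix | P (f i)} (fun i => f (proj1_sig i))
  end.

(** Well-ordered types with a successor function (standing in for the
    class of ordinals). *)
Record WOrd := {
  ord :> Type;
  olt : ord -> ord -> Prop;
  olt_wf : well_founded olt;
  olt_trans : forall a b c, olt a b -> olt b c -> olt a c;
  olt_total : forall a b, olt a b \/ a = b \/ olt b a;
  osucc : ord -> ord;
  osucc_lt : forall a, olt a (osucc a);
  osucc_least : forall a d, olt a d -> ~ olt d (osucc a)
}.
Arguments olt {w} _ _.
Arguments osucc {w} _.

Definition is_zero {O : WOrd} (g : O) : Prop := forall d, ~ olt d g.
Definition is_limit {O : WOrd} (g : O) : Prop :=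
  (exists d, olt d g) /\ forall b, g <> osucc b.

Definition LO_atoms {A : Type} (le : A -> A -> Prop) (x : V A) : Prop :=
  (exists y, mem y x) /\
  (forall y, mem y x -> exists a, veq y (Atom a)) /\
  (forall a b, mem (Atom a) x -> le b a -> mem (Atom b) x).

Definition LO_sub {A : Type} (X : V A -> Prop) (x : V A) : Prop :=
  (exists y, mem y x) /\
  (forall y, mem y x -> X y) /\
  (forall y z, mem y x -> X z -> vsub z y -> mem z x).

(** One step of the transfinite recursion defining M_γ
    (M_0 = ∅, M_1 = LO(A,≼), M_{β+1} = LO(M_β,⊆) for β ≥ 1,
     M_λ = ⋃_{β<λ} M_β for limit λ). *)
Definition Mbody {A : Type} (le : A -> A -> Prop) (O : WOrd) (g : O)
    (rec : forall d : O, olt d g -> V A -> Prop) : V A -> Prop :=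
  fun x =>
    (exists b (h : olt b g), g = osucc b /\
        ((is_zero b /\ LO_atoms le x) \/ (~ is_zero b /\ LO_sub (rec b h) x)))
    \/ (is_limit g /\ exists b (h : olt b g), rec b h x).

Definition Mh {A : Type} (le : A -> A -> Prop) {O : WOrd} : O -> V A -> Prop :=
  Fix (olt_wf O) (fun _ => V A -> Prop) (Mbody le O).

(* Since α is a limit, M_α is the union of the successor stages M_{β+1}, β < α,
   so x ⊆ M_α is the union of its slices x_{β+1}.  If x is a ⊆-initial segment
   of M_α, each slice is a ⊆-initial segment of M_{β+1}.  Conversely, if z ⊆ y
   with z ∈ M_α and y ∈ x_{β+1}, then z already lies in M_{β+1}: membership in
   the stage of a set is inherited by its subsets that belong to M at all
   (by ∈-induction on the larger set).  Hence z ∈ x_{β+1} ⊆ x. *)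
From Stdlib Require Import List FunctionalExtensionality.

Lemma veq_sym {A} (x y : V A) : veq x y -> veq y x.
Proof.
  revert y; induction x as [a|Ix f IH]; destruct y as [b|J g]; simpl; intros H;
    auto; try contradiction.
  destruct H as [H1 H2]; split.
  - intros j; destruct (H2 j) as [i Hi]; exists i; apply IH; auto.
  - intros i; destruct (H1 i) as [j Hj]; exists j; apply IH; auto.
Qed.

Lemma veq_trans {A} (x y z : V A) : veq x y -> veq y z -> veq x z.
Proof.
  revert y z; induction x as [a|Ix f IH]; destruct y as [b|J g]; destruct z as [c|K h];
    simpl; intros H H'; try contradiction; try congruence.
  destruct H as [H1 H2]; destruct H' as [H1' H2']; split.
  - intros i; destruct (H1 i) as [j Hj]; destruct (H1' j) as [k Hk]; exists k; eauto.
  - intros k; destruct (H2' k) as [j Hj]; destruct (H2 j) as [i Hi]; exists i; eauto.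
Qed.

Lemma mem_veq_r {A} (y x x' : V A) : mem y x -> veq x x' -> mem y x'.
Proof.
  destruct x as [a|Ix f]; destruct x' as [b|J g]; simpl; intros H H'; try contradiction.
  destruct H as [i Hi]; destruct H' as [H1 _]; destruct (H1 i) as [j Hj].
  exists j; eapply veq_trans; eauto.
Qed.

Lemma vsub_veq_r {A} (w y y' : V A) : vsub w y -> veq y y' -> vsub w y'.
Proof. intros H E z Hz; exact (mem_veq_r z y y' (H z Hz) E). Qed.

Lemma mem_sep {A} (P : V A -> Prop) (x z : V A) :
  (forall y y', veq y y' -> P y -> P y') ->
  mem z (sep x P) <-> mem z x /\ P z.
Proof.
  intros HP; destruct x as [a|Ix f]; simpl; [tauto|split].
  - intros [[i Pi] Hi]; simpl in Hi.
    split; [exists i; exact Hi | exact (HP _ _ (veq_sym _ _ Hi) Pi)].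
  - intros [[i Hi] Pz]; exists (exist _ i (HP _ _ Hi Pz)); exact Hi.
Qed.

Lemma osucc_inj {O : WOrd} (a b : O) : osucc a = osucc b -> a = b.
Proof.
  intros E; destruct (olt_total O a b) as [H|[H|H]]; auto; exfalso.
  - apply (osucc_least O a b H); rewrite E; apply osucc_lt.
  - apply (osucc_least O b a H); rewrite <- E; apply osucc_lt.
Qed.

Lemma osucc_not_zero {O : WOrd} (b : O) : ~ is_zero (osucc b).
Proof. intros Z; exact (Z b (osucc_lt O b)). Qed.

Lemma limit_not_zero {O : WOrd} (g : O) : is_limit g -> ~ is_zero g.
Proof. intros [[d Hd] _] Z; exact (Z d Hd). Qed.

Lemma limit_osucc_lt {O : WOrd} (g b : O) : is_limit g -> olt b g -> olt (osucc b) g.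
Proof.
  intros [_ L] Hb; destruct (olt_total O (osucc b) g) as [H|[H|H]]; auto; exfalso.
  - exact (L b (eq_sym H)).
  - exact (osucc_least O b g Hb H).
Qed.

Section Magmatic.

Variables (A : Type) (le : A -> A -> Prop) (O : WOrd).

Definition succ_stage (b : O) (x : V A) : Prop :=
  (is_zero b /\ LO_atoms le x) \/ (~ is_zero b /\ LO_sub (Mh le b) x).

Lemma Mh_unfold (g : O) (x : V A) :
  Mh le g x <-> (exists b, g = osucc b /\ succ_stage b x) \/
                (is_limit g /\ exists b, olt b g /\ Mh le b x).
Proof.
  assert (Hfix : Mh le g = Mbody le O g (fun d _ => Mh le d)).
  { unfold Mh; rewrite Fix_eq; [reflexivity|].
    intros g' f1 f2 H.
    replace f2 with f1; [reflexivity|].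
    apply functional_extensionality_dep; intro d.
    apply functional_extensionality_dep; intro h; apply H. }
  rewrite Hfix; unfold Mbody, succ_stage; split.
  - intros [[b [h [E H]]]|[L [b [h H]]]]; [left | right]; eauto.
  - intros [[b [E H]]|[L [b [h H]]]].
    + left; exists b, (eq_rect_r (olt b) (osucc_lt O b) E); auto.
    + right; eauto.
Qed.

Lemma Mh_succ (b : O) (x : V A) : Mh le (osucc b) x <-> succ_stage b x.
Proof.
  rewrite Mh_unfold; split.
  - intros [[b' [E H]]|[[_ L] _]].
    + apply osucc_inj in E; subst; auto.
    + exfalso; exact (L b eq_refl).
  - intros H; left; eauto.
Qed.

Lemma Mh_succ_LO_sub (b : O) (x : V A) :
  ~ is_zero b -> Mh le (osucc b) x <-> LO_sub (Mh le b) x.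
Proof. rewrite Mh_succ; unfold succ_stage; tauto. Qed.

Lemma Mh_iff_succ_stage (g : O) (x : V A) :
  Mh le g x <-> exists b, succ_stage b x /\
                          (g = osucc b \/ (is_limit g /\ olt (osucc b) g)).
Proof.
  split.
  - revert x; induction (olt_wf O g) as [g _ IH]; intros x H.
    apply Mh_unfold in H; destruct H as [[b [E H]]|[L [b [h H]]]]; [exists b; auto|].
    destruct (IH b h x H) as [c [Sc Ec]]; exists c; split; auto; right; split; auto.
    destruct Ec as [E|[_ E]]; [subst; auto | eapply olt_trans; eauto].
  - intros [b [S [E|[L E]]]].
    + subst; apply Mh_succ; auto.
    + apply Mh_unfold; right; split; auto.
      exists (osucc b); split; auto; apply Mh_succ; auto.
Qed.

Lemma Mh_limit (g : O) (x : V A) :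
  is_limit g -> Mh le g x <-> exists b, olt b g /\ Mh le (osucc b) x.
Proof.
  intros Lg; rewrite Mh_iff_succ_stage; split.
  - intros [b [S [E|[_ E]]]].
    + exfalso; exact (proj2 Lg b E).
    + exists b; split; [eapply olt_trans; [apply osucc_lt | exact E] | apply Mh_succ; auto].
  - intros [b [Hb H]]; exists b; split; [apply Mh_succ; auto|].
    right; split; auto; apply limit_osucc_lt; auto.
Qed.

Lemma succ_stage_nonempty (b : O) (x : V A) : succ_stage b x -> exists y, mem y x.
Proof. intros [[_ [H _]]|[_ [H _]]]; auto. Qed.

Lemma Mh_nonempty (g : O) (x : V A) : Mh le g x -> exists y, mem y x.
Proof.
  rewrite Mh_iff_succ_stage; intros [b [S _]]; eapply succ_stage_nonempty; eauto.
Qed.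

Lemma Mh_not_atom (g : O) (y : V A) (a : A) : Mh le g y -> ~ veq y (Atom a).
Proof.
  intros H E; destruct (Mh_nonempty g y H) as [z Hz]; exact (mem_veq_r z y _ Hz E).
Qed.

Lemma succ_stage_ext (b : O) (x x' : V A) :
  (forall y, mem y x <-> mem y x') -> succ_stage b x -> succ_stage b x'.
Proof.
  unfold succ_stage, LO_atoms, LO_sub; intros H [[Z [[y Hy] [Ha Hd]]]|[Z [[y Hy] [Ha Hd]]]].
  - left; split; auto; split; [exists y; apply H; auto|split].
    + intros y' Hy'; apply Ha, H; auto.
    + intros a c Ha' Hl; apply H; apply Hd with a; auto; apply H; auto.
  - right; split; auto; split; [exists y; apply H; auto|split].
    + intros y' Hy'; apply Ha, H; auto.
    + intros y' z Hy' Hz Hs; apply H; apply Hd with y'; auto; apply H; auto.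
Qed.

Lemma Mh_veq (g : O) (x x' : V A) : veq x x' -> Mh le g x -> Mh le g x'.
Proof.
  intros E; rewrite !Mh_iff_succ_stage; intros [b [S L]]; exists b; split; auto.
  apply (succ_stage_ext b x); auto.
  intros y; split; intros Hy; eapply mem_veq_r; eauto using veq_sym.
Qed.

Lemma succ_stage_mem_atom (b : O) (x y : V A) :
  succ_stage b x -> mem y x -> (is_zero b <-> exists a, veq y (Atom a)).
Proof.
  intros [[Z [_ [Ha _]]]|[Z [_ [Hm _]]]] Hy; split; auto.
  - contradiction.
  - intros [a Ha]; destruct (Mh_not_atom b y a (Hm y Hy) Ha).
Qed.

Lemma Mh_sub_closed (u : V A) :
  forall (w : V A) (g d : O), Mh le g w -> Mh le d u -> vsub w u -> Mh le d w.
Proof.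
  induction u as [a|Ix f IH]; intros w g d Hw Hu Hs.
  { exfalso; destruct (Mh_nonempty d _ Hu) as [y Hy]; exact Hy. }
  apply Mh_iff_succ_stage in Hu, Hw.
  destruct Hu as [b [Sb Lb]], Hw as [c [Sc _]].
  apply Mh_iff_succ_stage; exists b; split; auto.
  destruct (succ_stage_nonempty c w Sc) as [y0 Hy0].
  assert (Hzero : is_zero c <-> is_zero b).
  { rewrite (succ_stage_mem_atom c w y0 Sc Hy0).
    rewrite (succ_stage_mem_atom b _ y0 Sb (Hs y0 Hy0)); tauto. }
  destruct Sc as [[Zc Lc]|[Zc [_ [Ec Dc]]]]; [left; tauto|].
  destruct Sb as [[Zb _]|[Zb [_ [Eb _]]]]; [tauto|].
  right; split; auto; split; [exists y0; exact Hy0|split].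
  - intros y Hy; apply Eb, Hs, Hy.
  - intros y z Hy Hz Hzy; apply Dc with y; auto.
    destruct (Hs y Hy) as [i Hi].
    apply (IH i z b c Hz); [exact (Mh_veq c y _ Hi (Ec y Hy)) | exact (vsub_veq_r z y _ Hzy Hi)].
Qed.

Section Limit.

Variables (alpha : O) (x : V A).
Hypothesis alpha_limit : is_limit alpha.

Definition slice_index (b : O) : Prop :=
  olt b alpha /\ exists z, mem z x /\ Mh le (osucc b) z.

Definition slice (b : O) : V A := sep x (Mh le (osucc b)).

Lemma mem_slice (b : O) (z : V A) : mem z (slice b) <-> mem z x /\ Mh le (osucc b) z.
Proof. apply mem_sep; intros y y' E; apply Mh_veq; exact E. Qed.

Lemma slice_cover (z : V A) :
  mem z x -> Mh le alpha z -> exists b, slice_index b /\ mem z (slice b).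
Proof.
  intros Hz Ha; apply Mh_limit in Ha; auto; destruct Ha as [b [Hb Hm]].
  exists b; split; [split; eauto | apply mem_slice; auto].
Qed.

Lemma LO_sub_slice (b : O) :
  LO_sub (Mh le alpha) x -> slice_index b -> LO_sub (Mh le (osucc b)) (slice b).
Proof.
  intros [_ [_ Dx]] [Hb [z [Hz Hmz]]].
  split; [exists z; apply mem_slice; auto | split].
  - intros y Hy; apply mem_slice in Hy; tauto.
  - intros y z' Hy Hz' Hzy; apply mem_slice in Hy; apply mem_slice; split; auto.
    apply Dx with y; [tauto | apply Mh_limit; eauto | exact Hzy].
Qed.

Lemma LO_sub_of_slices :
  (exists y, mem y x) -> (forall y, mem y x -> Mh le alpha y) ->
  (forall b, slice_index b -> LO_sub (Mh le (osucc b)) (slice b)) ->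
  LO_sub (Mh le alpha) x.
Proof.
  intros Hne Hsub Hsl; split; [exact Hne | split; [exact Hsub |]].
  intros y z Hy Hz Hzy.
  destruct (slice_cover y Hy (Hsub y Hy)) as [b [Ib Hyb]].
  destruct (Hsl b Ib) as [_ [_ Db]].
  apply mem_slice in Hyb; destruct Hyb as [_ Hyb].
  assert (Hzb : Mh le (osucc b) z) by exact (Mh_sub_closed y z alpha (osucc b) Hz Hyb Hzy).
  apply (proj1 (mem_slice b z)), Db with y; auto.
  apply mem_slice; auto.
Qed.

Lemma Mh_succ_limit_iff_slices :
  (exists y, mem y x) -> (forall y, mem y x -> Mh le alpha y) ->
  Mh le (osucc alpha) x <->
    ((exists b, slice_index b) /\
     (forall z, mem z x <-> exists b, slice_index b /\ mem z (slice b)) /\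
     (forall b, slice_index b -> Mh le (osucc (osucc b)) (slice b))).
Proof.
  intros Hne Hsub.
  rewrite Mh_succ_LO_sub by (apply limit_not_zero; exact alpha_limit).
  assert (Hcover : forall z, mem z x <-> exists b, slice_index b /\ mem z (slice b)).
  { intros z; split.
    - intros Hz; exact (slice_cover z Hz (Hsub z Hz)).
    - intros [b [_ Hz]]; apply mem_slice in Hz; tauto. }
  assert (Hindex : exists b, slice_index b).
  { destruct Hne as [y Hy]; destruct (proj1 (Hcover y) Hy) as [b [Ib _]]; eauto. }
  split.
  - intros Hx; split; [exact Hindex | split; [exact Hcover |]].
    intros b Ib; apply Mh_succ_LO_sub; [apply osucc_not_zero | exact (LO_sub_slice b Hx Ib)].
  - intros [_ [_ Hsl]]; apply LO_sub_of_slices; auto.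
    intros b Ib; apply Mh_succ_LO_sub; [apply osucc_not_zero | exact (Hsl b Ib)].
Qed.

End Limit.

End Magmatic.

Theorem proposition4p9 (A : Type) (le : A -> A -> Prop) (O : WOrd) :
  (forall l : list A, exists a, ~ In a l) ->
  (forall a, le a a) ->
  (forall a b c, le a b -> le b c -> le a c) ->
  (forall a, exists b, le b a /\ ~ le a b) ->
  forall (alpha : O) (x : V A),
    is_limit alpha ->
    (exists y, mem y x) ->
    (forall y, mem y x -> Mh le alpha y) ->
    let I := fun b : O => olt b alpha /\ exists z, mem z x /\ Mh le (osucc b) z in
    let xs := fun b : O => sep x (Mh le (osucc b)) in
    Mh le (osucc alpha) x <->
      ((exists b, I b) /\
       (forall z, mem z x <-> exists b, I b /\ mem z (xs b)) /\
       (forall b, I b -> Mh le (osucc (osucc b)) (xs b))).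
Proof.
  intros _ _ _ _ alpha x Hlim Hne Hsub.
  exact (Mh_succ_limit_iff_slices A le O alpha x Hlim Hne Hsub).
Qed.
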